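(* There exists an online ranking game for NDCG with top-1 feedback (binary relevance, some fixed number of objects $m$) such that for every online learning algorithm there is an adversary strategy generating $r_1,\dots,r_T\in\{0,1\}^m$ with $$\max_\sigma\sum_{t=1}^T NDCG(\sigma,r_t)-\mathbb{E}\Big[\sum_{t=1}^T NDCG(\sigma_t,r_t)\Big]=\Omega(T).$$ The same lower bound holds with NDCG replaced by MAP or by AUC (for AUC, a loss, the regret is $\mathbb{E}\sum_t AUC(\sigma_t,r_t)-\min_\sigma\sum_t AUC(\sigma,r_t)$).
   Context: Objects are $\{1,\dots,m\}$; a ranking is a permutation $\sigma$ of $[m]$ with $\sigma(i)$ the rank of object $i$ and $\sigma^{-1}(j)$ the object at rank $j$. $NDCG(\sigma,r)=\frac{1}{Z(r)}\sum_{i=1}^m\frac{r(i)}{\log_2(1+\sigma(i))}$ with $Z(r)=\max_\sigma\sum_i\frac{r(i)}{\log_2(1+\sigma(i))}$; $MAP(\sigma,r)=\frac{1}{\|r\|_1}\sum_{i=1}^m\frac{\sum_{j\le i}\mathbb{1}(r(\sigma^{-1}(j))=1)}{i}\mathbb{1}(r(\sigma^{-1}(i))=1)$; $AUC(\sigma,r)=\frac{1}{N(r)}\sum_{i,j}\mathbb{1}(\sigma(i)<\sigma(j))\mathbb{1}(r(i)<r(j))$ with $N(r)=\|r\|_1(m-\|r\|_1)$. Game: an oblivious adversary fixes $r_1,\dots,r_T$ in advance; at round $t$ the learner (possibly randomized) outputs $\sigma_t$ and observes only $r_t(\sigma_t^{-1}(1))$, the relevance of the top-ranked object; the expectation is over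 the learner's randomization. *)

From HB Require Import structures.
From mathcomp Require Import all_boot all_order all_algebra all_fingroup.
From mathcomp Require Import all_classical all_reals exp.
Set Implicit Arguments. Unset Strict Implicit. Unset Printing Implicit Defensive.
Import Order.TTheory GRing.Theory Num.Theory.
Local Open Scope ring_scope.

(* Objects are 'I_m (object k of the paper is the ordinal k-1).
   A ranking is sigma : 'S_m; the paper's rank sigma(i) in {1..m} is
   (sigma i).+1 here, and sigma^{-1}(j) (object at rank j) is
   (sigma^-1)%g applied to the ordinal j-1.
   A binary relevance vector is r : 'I_m -> bool (true = relevant). *)

Section Metrics.
Variable R : realType.
Variable m : nat.

Definition log2 (x : R) : R := ln x / ln 2.

Definition DCG (s : 'S_m) (r : 'I_m -> bool) : R :=
  \sum_(i < m) (r i)%:R / log2 ((s i).+1.+1)%:R.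

(* Z(r) = max_sigma DCG(sigma, r)  (the fold starts from the value at the
   identity ranking, which is itself among the candidates) *)
Definition Zn (r : 'I_m -> bool) : R :=
  \big[Num.max/(DCG 1%g r)]_(s : 'S_m) DCG s r.

Definition NDCG (s : 'S_m) (r : 'I_m -> bool) : R := DCG s r / Zn r.

Definition norm1 (r : 'I_m -> bool) : nat := #|[set i | r i]|.

(* MAP(sigma,r) = 1/||r||_1 sum_i [sum_{j<=i} 1(r(sigma^-1 j)=1)]/i * 1(r(sigma^-1 i)=1),
   ranks i,j in {1..m} written as ordinals i,j in {0..m-1} (so i is (i:nat)+1). *)
Definition MAP (s : 'S_m) (r : 'I_m -> bool) : R :=
  (norm1 r)%:R^-1 *
  \sum_(i < m)
     ((\sum_(j < m | (j <= i)%N) (r ((s^-1)%g j))%:R) / (i.+1)%:R)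
     * (r ((s^-1)%g i))%:R.

Definition AUC (s : 'S_m) (r : 'I_m -> bool) : R :=
  ((norm1 r * (m - norm1 r))%N)%:R^-1 *
  \sum_(i < m) \sum_(j < m) ((s i < s j)%N && (r i < r j)%O)%:R.

(* Relevance of the top-ranked object, r(sigma^{-1}(1)): the unique
   object i with sigma(i) = 1 (i.e. ordinal rank 0). *)
Definition top_feedback (s : 'S_m) (r : 'I_m -> bool) : bool :=
  [exists i, ((s i : nat) == 0%N) && r i].

(* A deterministic strategy maps the round index t and the list of
   feedbacks observed in rounds 0..t-1 to a ranking. *)
Definition strategy := nat -> seq bool -> 'S_m.

Fixpoint history (st : strategy) (rs : nat -> 'I_m -> bool) (t : nat)
  : seq bool :=
  match t with
  | 0 => [::]
  | t'.+1 => let h := history st rs t' in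
             rcons h (top_feedback (st t' h) (rs t'))
  end.

(* ranking output at round t (rounds numbered 0..T-1) *)
Definition play (st : strategy) (rs : nat -> 'I_m -> bool) (t : nat) : 'S_m :=
  st t (history st rs t).

(* A randomized learner: a probability distribution p over a finite set
   Omega of internal random seeds, each seed determining a deterministic
   strategy. *)
Definition is_distr (Omega : finType) (p : Omega -> R) : Prop :=
  (forall w, 0 <= p w) /\ \sum_(w : Omega) p w = 1.

Definition expected_cum (f : 'S_m -> ('I_m -> bool) -> R) (T : nat)
  (Omega : finType) (p : Omega -> R) (st : Omega -> strategy)
  (rs : nat -> 'I_m -> bool) : R :=
  \sum_(w : Omega) p w * \sum_(t < T) f (play (st w) rs t) (rs t).

Definition best_cum (f : 'S_m -> ('I_m -> bool) -> R) (T : nat)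
  (rs : nat -> 'I_m -> bool) : R :=
  \big[Num.max/(\sum_(t < T) f 1%g (rs t))]_(s : 'S_m) \sum_(t < T) f s (rs t).

Definition min_cum (f : 'S_m -> ('I_m -> bool) -> R) (T : nat)
  (rs : nat -> 'I_m -> bool) : R :=
  \big[Num.min/(\sum_(t < T) f 1%g (rs t))]_(s : 'S_m) \sum_(t < T) f s (rs t).

End Metrics.

Definition gain_regret_Omega_T (R : realType)
  (f : forall m : nat, 'S_m -> ('I_m -> bool) -> R) : Prop :=
  exists m : nat, exists c : R, 0 < c /\ exists T0 : nat,
    forall T : nat, (T0 <= T)%N ->
    forall (Omega : finType) (p : Omega -> R) (st : Omega -> strategy m),
      is_distr p ->
      exists rs : nat -> 'I_m -> bool,
        c * T%:R <= best_cum (f m) T rs - expected_cum (f m) T p st rs.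

Definition loss_regret_Omega_T (R : realType)
  (f : forall m : nat, 'S_m -> ('I_m -> bool) -> R) : Prop :=
  exists m : nat, exists c : R, 0 < c /\ exists T0 : nat,
    forall T : nat, (T0 <= T)%N ->
    forall (Omega : finType) (p : Omega -> R) (st : Omega -> strategy m),
      is_distr p ->
      exists rs : nat -> 'I_m -> bool,
        c * T%:R <= expected_cum (f m) T p st rs
                    - min_cum (f m) T rs.

(* Take two environments, each drawing every round one of two relevance vectors by
   a fair coin, chosen so that for every ranking the relevance of its top object
   has the same law under both.  Then the law of the learner's rankings is the
   same in both environments, so its mean gain per round, summed over the two
   environments, is at most the largest value M of that sum for a fixed ranking.
   If, using a different fixed ranking in each environment, the best fixed
   rankings together earn D > 0 more than M per round, then the expected regret,
   averaged over the environment and the coins, is at least D T / 2, and some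
   realisation of the coins in one environment is an oblivious adversary with
   regret at least D T / 2.  Such environments exist with 3 objects for NDCG and
   MAP; for the loss AUC the argument is applied to the gain -AUC, with 4 objects. *)

From Pilot Require Import Defs.
From HB Require Import structures.
From mathcomp Require Import all_boot all_order all_algebra all_fingroup.
From mathcomp Require Import all_classical all_reals exp.
From mathcomp Require Import ring lra.
Set Implicit Arguments. Unset Strict Implicit. Unset Printing Implicit Defensive.
Import Order.TTheory GRing.Theory Num.Theory.
Local Open Scope ring_scope.

Section CoinAverage.
Variable R : realType.

Definition scons (b : bool) (s : nat -> bool) : nat -> bool :=
  fun k => if k is k'.+1 then s k' else b.

(* The expectation of [F s] when [s 0], ..., [s (n-1)] are independent fair
   coins (the later coordinates of [s] are fixed to [false]). *)
Fixpoint coin_avg (n : nat) (F : (nat -> bool) -> R) : R :=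
  if n is n'.+1 then
    (coin_avg n' (fun s => F (scons true s)) + coin_avg n' (fun s => F (scons false s))) / 2
  else F (fun _ => false).

Lemma eq_coin_avg n F G : (forall s, F s = G s) -> coin_avg n F = coin_avg n G.
Proof.
elim: n F G => [|n IH] F G FG /=; first exact: FG.
by congr ((_ + _) / 2); apply: IH => s; apply: FG.
Qed.

Lemma coin_avg_cst n c : coin_avg n (fun _ => c) = c.
Proof. by elim: n => [|n IH] //=; rewrite IH; lra. Qed.

Lemma coin_avgD n F G : coin_avg n (fun s => F s + G s) = coin_avg n F + coin_avg n G.
Proof. by elim: n F G => [|n IH] F G //=; rewrite !IH; lra. Qed.

Lemma coin_avgZ n c F : coin_avg n (fun s => c * F s) = c * coin_avg n F.
Proof. by elim: n F => [|n IH] F //=; rewrite !IH -mulrDr mulrA. Qed.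

Lemma coin_avgB n F G : coin_avg n (fun s => F s - G s) = coin_avg n F - coin_avg n G.
Proof.
rewrite -mulN1r -coin_avgZ -coin_avgD.
by apply: eq_coin_avg => s; rewrite mulN1r.
Qed.

Lemma coin_avg_sum n (I : finType) (G : I -> (nat -> bool) -> R) :
  coin_avg n (fun s => \sum_(i : I) G i s) = \sum_(i : I) coin_avg n (G i).
Proof. by elim: n G => [|n IH] G //=; rewrite !IH -big_split mulr_suml. Qed.

Lemma ler_coin_avg n F G : (forall s, F s <= G s) -> coin_avg n F <= coin_avg n G.
Proof.
elim: n F G => [|n IH] F G FG /=; first exact: FG.
by rewrite ler_pM2r ?invr_gt0 ?ltr0n // lerD //; apply: IH => s; apply: FG.
Qed.

Lemma exists_coin_avg_le n F : exists s, coin_avg n F <= F s.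
Proof.
elim: n F => [|n IH] F /=; first by exists (fun _ => false).
have [s1 le1] := IH (fun s => F (scons true s)).
have [s2 le2] := IH (fun s => F (scons false s)).
have [le21|lt12] := lerP (coin_avg n (fun s => F (scons false s)))
                         (coin_avg n (fun s => F (scons true s))).
  by exists (scons true s1); lra.
by exists (scons false s2); lra.
Qed.

End CoinAverage.

Section Game.
Variables (R : realType) (m : nat).

Definition shift_strategy (st : strategy m) (b : bool) : strategy m :=
  fun t h => st t.+1 (b :: h).

Lemma historyS (st : strategy m) rs t :
  history st rs t.+1 =
  top_feedback (play st rs 0) (rs 0%N) ::
    history (shift_strategy st (top_feedback (play st rs 0) (rs 0%N)))
            (fun k => rs k.+1) t.
Proof. by elim: t => [|t /= ->]. Qed.

Lemma playS (st : strategy m) rs t :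
  play st rs t.+1 =
  play (shift_strategy st (top_feedback (play st rs 0) (rs 0%N))) (fun k => rs k.+1) t.
Proof. by rewrite /play historyS. Qed.

(* An environment [a] plays the relevance vector [a b] after a coin toss [b]. *)
Definition feedback_equiv (a1 a2 : bool -> 'I_m -> bool) : Prop :=
  forall sg : 'S_m,
    perm_eq [:: top_feedback sg (a1 true); top_feedback sg (a1 false)]
            [:: top_feedback sg (a2 true); top_feedback sg (a2 false)].

Lemma feedback_equiv_sum a1 a2 (sg : 'S_m) (H : bool -> R) :
  feedback_equiv a1 a2 ->
  H (top_feedback sg (a1 true)) + H (top_feedback sg (a1 false)) =
  H (top_feedback sg (a2 true)) + H (top_feedback sg (a2 false)).
Proof.
move=> /(_ sg) /(perm_big _ (op := +%R) (x := 0) (P := xpredT) (F := H)).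
by rewrite !big_cons !big_nil /= !addr0.
Qed.

Lemma coin_avg_play_indep n t st a (G : 'S_m -> bool -> R) : (t < n)%N ->
  coin_avg n (fun s => G (play st (a \o s) t) (s t)) =
  coin_avg n (fun s => (G (play st (a \o s) t) true + G (play st (a \o s) t) false) / 2).
Proof.
elim: n t st => [|n IH] [|t] st // lt_tn.
  by rewrite /= /play /= !coin_avg_cst; lra.
have shift b (F : 'S_m -> bool -> R) :
    coin_avg n (fun s => F (play st (a \o scons b s) t.+1) (s t)) =
    coin_avg n (fun s =>
      F (play (shift_strategy st (top_feedback (st 0%N [::]) (a b))) (a \o s) t) (s t)).
  by apply: eq_coin_avg => s; rewrite playS.
rewrite /= (shift true G) (shift false G).
rewrite (shift true (fun sg _ => (G sg true + G sg false) / 2)).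
rewrite (shift false (fun sg _ => (G sg true + G sg false) / 2)).
by rewrite !IH.
Qed.

Lemma coin_avg_play_equiv n t st a1 a2 (g : 'S_m -> R) :
  feedback_equiv a1 a2 -> (t <= n)%N ->
  coin_avg n (fun s => g (play st (a1 \o s) t)) =
  coin_avg n (fun s => g (play st (a2 \o s) t)).
Proof.
move=> eqa; elim: n t st => [|n IH] [|t] st // le_tn.
pose K a b := coin_avg n (fun s => g (play (shift_strategy st b) (a \o s) t)).
have shift a b : coin_avg n (fun s => g (play st (a \o scons b s) t.+1)) =
                 K a (top_feedback (st 0%N [::]) (a b)).
  by apply: eq_coin_avg => s; rewrite playS.
have K_eq b : K a1 b = K a2 b by apply: IH.
by rewrite /= !shift !K_eq (feedback_equiv_sum (st 0%N [::]) (K a2) eqa).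
Qed.

End Game.

Section Regret.
Variables (R : realType) (m : nat) (f : 'S_m -> ('I_m -> bool) -> R).

Definition env_mean (a : bool -> 'I_m -> bool) (sg : 'S_m) : R :=
  (f sg (a true) + f sg (a false)) / 2.

Lemma coin_avg_expected_cum a n T (Omega : finType) (p : Omega -> R) st :
  (T <= n)%N ->
  coin_avg n (fun s => expected_cum f T p st (a \o s)) =
  \sum_w p w * \sum_(t < T) coin_avg n (fun s => env_mean a (play (st w) (a \o s) t)).
Proof.
move=> le_Tn; rewrite /expected_cum coin_avg_sum; apply: eq_bigr => w _.
rewrite coin_avgZ coin_avg_sum; congr (_ * _); apply: eq_bigr => t _.
exact: (coin_avg_play_indep _ _ (fun sg b => f sg (a b)) (leq_trans (ltn_ord t) le_Tn)).
Qed.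

Lemma coin_avg_fixed_cum a n T sg : (T <= n)%N ->
  coin_avg n (fun s => \sum_(t < T) f sg ((a \o s) t)) = T%:R * env_mean a sg.
Proof.
move=> le_Tn; rewrite coin_avg_sum mulr_natl -[X in _ *+ X]card_ord -sumr_const.
apply: eq_bigr => t _.
have := coin_avg_play_indep (fun _ _ => 1%g) a (fun _ b => f sg (a b))
  (leq_trans (ltn_ord t) le_Tn).
by rewrite coin_avg_cst.
Qed.

Lemma coin_avg_expected_cum_le a1 a2 n T (Omega : finType) (p : Omega -> R) st M :
  feedback_equiv a1 a2 -> is_distr p -> (T <= n)%N ->
  (forall sg, env_mean a1 sg + env_mean a2 sg <= M) ->
  coin_avg n (fun s => expected_cum f T p st (a1 \o s)) +
  coin_avg n (fun s => expected_cum f T p st (a2 \o s)) <= T%:R * M.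
Proof.
move=> eqa [p_ge0 p_sum1] le_Tn meanM.
rewrite !coin_avg_expected_cum // -big_split /=.
rewrite -[T%:R * M]mul1r -{1}p_sum1 mulr_suml; apply: ler_sum => w _.
rewrite -mulrDr; apply: ler_wpM2l => //.
rewrite -big_split /= mulr_natl -[X in _ *+ X]card_ord -sumr_const.
apply: ler_sum => t _.
rewrite -(coin_avg_play_equiv (st w) (env_mean a2) eqa (ltnW (leq_trans (ltn_ord t) le_Tn))).
by rewrite -coin_avgD -[M](coin_avg_cst n); apply: ler_coin_avg.
Qed.

Definition linear_gain_regret : Prop :=
  exists c : R, 0 < c /\ exists T0 : nat,
    forall T : nat, (T0 <= T)%N ->
    forall (Omega : finType) (p : Omega -> R) (st : Omega -> strategy m),
      is_distr p ->
      exists rs : nat -> 'I_m -> bool,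
        c * T%:R <= best_cum f T rs - expected_cum f T p st rs.

Lemma linear_gain_regret_of_gap a1 a2 s1 s2 M :
  feedback_equiv a1 a2 ->
  (forall sg, env_mean a1 sg + env_mean a2 sg <= M) ->
  M < env_mean a1 s1 + env_mean a2 s2 ->
  linear_gain_regret.
Proof.
move=> eqa meanM gap; set D := env_mean a1 s1 + env_mean a2 s2 - M.
exists (D / 2); split; first by rewrite /D; lra.
exists 0%N => T _ Omega p st p_distr.
pose regret (a : bool -> 'I_m -> bool) s :=
  best_cum f T (a \o s) - expected_cum f T p st (a \o s).
have best_ge a sg : T%:R * env_mean a sg <= coin_avg T (fun s => best_cum f T (a \o s)).
  by rewrite -(coin_avg_fixed_cum _ _ (leqnn T)); apply: ler_coin_avg => s; apply: le_bigmax.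
have avg_regret : D * T%:R <= coin_avg T (regret a1) + coin_avg T (regret a2).
  rewrite !coin_avgB.
  have := coin_avg_expected_cum_le st eqa p_distr (leqnn T) meanM.
  have := best_ge a1 s1; have := best_ge a2 s2.
  by rewrite /D; nra.
have [le_half|lt_half] := lerP (D / 2 * T%:R) (coin_avg T (regret a1)).
  have [s le_s] := exists_coin_avg_le T (regret a1).
  by exists (a1 \o s); apply: le_trans le_s.
have [s le_s] := exists_coin_avg_le T (regret a2).
by exists (a2 \o s); apply: le_trans le_s; lra.
Qed.

End Regret.

Section Opposite.
Variables (R : realType) (m : nat) (f : 'S_m -> ('I_m -> bool) -> R).

Let g (sg : 'S_m) (r : 'I_m -> bool) : R := - f sg r.

Lemma best_cum_opp T rs : best_cum g T rs = - min_cum f T rs.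
Proof.
rewrite /best_cum /min_cum (big_morph _ (@oppr_min R) (erefl _)) sumrN.
by apply: eq_bigr => sg _; rewrite sumrN.
Qed.

Lemma expected_cum_opp T (Omega : finType) (p : Omega -> R) st rs :
  expected_cum g T p st rs = - expected_cum f T p st rs.
Proof.
rewrite /expected_cum -sumrN; apply: eq_bigr => w _.
by rewrite sumrN mulrN.
Qed.

Lemma env_mean_opp a sg : env_mean g a sg = - env_mean f a sg.
Proof. by rewrite /env_mean -mulNr opprD. Qed.

End Opposite.

Lemma loss_regret_of_opp (R : realType) (F : forall m, 'S_m -> ('I_m -> bool) -> R) :
  gain_regret_Omega_T (fun m sg r => - F m sg r) -> loss_regret_Omega_T F.
Proof.
move=> [m [c [c_gt0 [T0 regret]]]]; exists m, c; split => //; exists T0.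
move=> T le_T0T Omega p st p_distr; have [rs le_c] := regret T le_T0T Omega p st p_distr.
by exists rs; rewrite best_cum_opp expected_cum_opp opprK addrC in le_c.
Qed.

Definition rel_of_seq m (l : seq bool) : 'I_m -> bool := fun i => nth false l i.

Lemma norm1E m (r : 'I_m -> bool) : Defs.norm1 r = (\sum_(i < m) r i)%N.
Proof.
rewrite /Defs.norm1 cardsE -sum1_card big_mkcond.
by apply: eq_bigr => i _; rewrite unfold_in; case: (r i).
Qed.

Lemma top_feedbackE n (sg : 'S_n.+1) r : top_feedback sg r = r ((sg^-1)%g ord0).
Proof.
apply/existsP/idP => [[i /andP[/eqP sg_i r_i]]|r_top].
  by rewrite -(_ : sg i = ord0) ?permK //; apply/val_inj.
by exists ((sg^-1)%g ord0); rewrite permKV eqxx r_top.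
Qed.

Lemma Zn_eq_max (R : realType) m (r : 'I_m -> bool) (z : R) (s0 : 'S_m) :
  (forall sg, DCG R sg r <= z) -> DCG R s0 r = z -> Zn R r = z.
Proof.
move=> le_z DCG_s0; apply/le_anti/andP; split.
  by apply: bigmax_le => // sg _; apply: le_z.
by rewrite -DCG_s0; apply: le_bigmax.
Qed.

Lemma uniq_perm_vals n (sg : 'S_n) (l : seq 'I_n) :
  uniq l -> uniq [seq nat_of_ord (sg i) | i <- l].
Proof. by move=> uniq_l; rewrite map_inj_uniq // => i j /val_inj /perm_inj. Qed.

Definition o30 : 'I_3 := @Ordinal 3 0 isT.
Definition o31 : 'I_3 := @Ordinal 3 1 isT.
Definition o32 : 'I_3 := @Ordinal 3 2 isT.
Definition o40 : 'I_4 := @Ordinal 4 0 isT.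
Definition o41 : 'I_4 := @Ordinal 4 1 isT.
Definition o42 : 'I_4 := @Ordinal 4 2 isT.
Definition o43 : 'I_4 := @Ordinal 4 3 isT.

Ltac case_perm3 sg :=
  move: (uniq_perm_vals sg (l := [:: o30; o31; o32]) isT) => /=;
  move: (nat_of_ord (sg o32)) (ltn_ord (sg o32));
  move: (nat_of_ord (sg o31)) (ltn_ord (sg o31));
  move: (nat_of_ord (sg o30)) (ltn_ord (sg o30));
  do 3 (case=> [|[|[|?]]] //= _); move=> // _.

Ltac case_perm4 sg :=
  move: (uniq_perm_vals sg (l := [:: o40; o41; o42; o43]) isT) => /=;
  move: (nat_of_ord (sg o43)) (ltn_ord (sg o43));
  move: (nat_of_ord (sg o42)) (ltn_ord (sg o42));
  move: (nat_of_ord (sg o41)) (ltn_ord (sg o41));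
  move: (nat_of_ord (sg o40)) (ltn_ord (sg o40));
  do 4 (case=> [|[|[|[|?]]]] //= _); move=> // _.

Section Concrete.
Variable R : realType.

Lemma sum_ord3 (F : 'I_3 -> R) : \sum_(i < 3) F i = F o30 + F o31 + F o32.
Proof.
rewrite !big_ord_recl big_ord0 addr0 addrA.
by congr (F _ + F _ + F _); apply: val_inj.
Qed.

Lemma sum_ord4 (F : 'I_4 -> R) : \sum_(i < 4) F i = F o40 + F o41 + F o42 + F o43.
Proof.
rewrite !big_ord_recl big_ord0 addr0 !addrA.
by congr (F _ + F _ + F _ + F _); apply: val_inj.
Qed.

Lemma log2_2 : log2 (2%:R : R) = 1.
Proof. by rewrite /log2 divff // gt_eqF // ln_gt0 // ltr1n. Qed.

Lemma log2_4 : log2 (4%:R : R) = 2.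
Proof.
have ln2_gt0 : 0 < ln (2%:R : R) by rewrite ln_gt0 // ltr1n.
rewrite /log2 (_ : 4%:R = 2%:R * 2%:R :> R) ?lnM ?posrE ?ltr0n -?natrM //.
by field; apply: lt0r_neq0.
Qed.

Lemma inv_log2_3_bounds : 2^-1 < (log2 (3%:R : R))^-1 < 1.
Proof.
have ln2_gt0 : 0 < ln (2%:R : R) by rewrite ln_gt0 // ltr1n.
have ln23 : ln (2%:R : R) < ln 3%:R by rewrite ltr_ln ?posrE ?ltr0n // ltr_nat.
have ln34 : ln (3%:R : R) < ln 2%:R + ln 2%:R.
  by rewrite -lnM ?posrE ?ltr0n // -natrM ltr_ln ?posrE ?ltr0n ?ltr_nat.
have log3_gt1 : 1 < log2 (3%:R : R) by rewrite /log2 ltr_pdivlMr // mul1r.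
have log3_lt2 : log2 (3%:R : R) < 2 by rewrite /log2 ltr_pdivrMr //; lra.
have log3_gt0 : 0 < log2 (3%:R : R) by lra.
by rewrite invf_lt1 // log3_gt1 ltf_pV2 ?posrE // log3_lt2.
Qed.

End Concrete.

(* Each object is relevant in exactly one of the two relevance vectors of each
   environment, so under both environments the top-1 feedback is a fair coin. *)
Definition env3a (b : bool) : 'I_3 -> bool :=
  rel_of_seq (if b then [:: false; true; true] else [:: true; false; false]).
Definition env3b (b : bool) : 'I_3 -> bool :=
  rel_of_seq (if b then [:: false; true; false] else [:: true; false; true]).

Lemma feedback_equiv_env3 : feedback_equiv env3a env3b.
Proof. by move=> sg; rewrite !top_feedbackE; case: ((sg^-1)%g ord0) => [[|[|[|?]]] ?]. Qed.

Section NDCG.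
Variable R : realType.
Local Notation Y := (log2 (3%:R : R))^-1.

Lemma Zn_env3 :
  [/\ Zn R (env3a true) = 1 + Y, Zn R (env3a false) = 1,
      Zn R (env3b true) = 1 & Zn R (env3b false) = 1 + Y].
Proof.
have := inv_log2_3_bounds R => Y_bounds.
split; [ apply: (Zn_eq_max (s0 := tperm o30 o32)) | apply: (Zn_eq_max (s0 := 1%g))
       | apply: (Zn_eq_max (s0 := tperm o30 o31)) | apply: (Zn_eq_max (s0 := tperm o31 o32))].
all: rewrite /DCG; first [move=> sg; rewrite sum_ord3; case_perm3 sg
                         | rewrite sum_ord3 ?perm1 ?tpermL ?tpermR ?tpermD //].
all: rewrite /= ?log2_2 ?log2_4; lra.
Qed.

Lemma inv_1_plus_Y_bounds : (1 + Y)^-1 * (1 + Y) = 1 /\ 2^-1 < (1 + Y)^-1 < 1.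
Proof.
have /andP[Y_gt Y_lt] := inv_log2_3_bounds R.
have Y1_gt0 : 0 < 1 + Y by lra.
split; first by rewrite mulVf // gt_eqF.
by rewrite invf_lt1 // ltf_pV2 ?posrE //; apply/andP; split; lra.
Qed.

(* The largest value of the sum of the two means, attained exactly by the
   rankings that put object 2 last. *)
Local Notation ndcg_threshold := ((2 + Y + (1 + Y)^-1) / 2).

Lemma ndcg_env3_mean_le sg :
  env_mean (@NDCG R 3) env3a sg + env_mean (@NDCG R 3) env3b sg <= ndcg_threshold.
Proof.
have [Za1 Za0 Zb1 Zb0] := Zn_env3.
have := inv_log2_3_bounds R; have := inv_1_plus_Y_bounds.
rewrite /env_mean /NDCG Za1 Za0 Zb1 Zb0 /DCG !sum_ord3.
set Z := (1 + Y)^-1 => -[Z_inv Z_bounds] Y_bounds.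
by case_perm3 sg; rewrite /= ?log2_2 ?log2_4; nra.
Qed.

Lemma ndcg_env3_gap :
  ndcg_threshold < env_mean (@NDCG R 3) env3a 1 + env_mean (@NDCG R 3) env3b (tperm o30 o31).
Proof.
have [Za1 Za0 Zb1 Zb0] := Zn_env3.
have := inv_log2_3_bounds R; have := inv_1_plus_Y_bounds.
rewrite /env_mean /NDCG Za1 Za0 Zb1 Zb0 /DCG !sum_ord3 !perm1 !tpermL !tpermR !tpermD //=.
set Z := (1 + Y)^-1 => -[Z_inv Z_bounds] Y_bounds.
by rewrite ?log2_2 ?log2_4; nra.
Qed.

End NDCG.

Section MAP.
Variable R : realType.

Lemma sum_ord3_cond (P : pred 'I_3) (F : 'I_3 -> R) :
  \sum_(i < 3 | P i) F i =
  (if P o30 then F o30 else 0) + (if P o31 then F o31 else 0) + (if P o32 then F o32 else 0).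
Proof. by rewrite big_mkcond sum_ord3. Qed.

Lemma norm1_env3 :
  [/\ Defs.norm1 (env3a true) = 2%N, Defs.norm1 (env3a false) = 1%N,
      Defs.norm1 (env3b true) = 1%N & Defs.norm1 (env3b false) = 2%N].
Proof. by split; rewrite norm1E !big_ord_recl big_ord0. Qed.

Lemma map_env3_mean_le sg :
  env_mean (@MAP R 3) env3a sg + env_mean (@MAP R 3) env3b sg <= 35 / 24.
Proof.
rewrite /env_mean /MAP; have [-> -> -> ->] := norm1_env3.
rewrite !sum_ord3 !sum_ord3_cond /env3a /env3b /rel_of_seq /=.
by case_perm3 (sg^-1)%g; lra.
Qed.

Lemma map_env3_gap :
  35 / 24 < env_mean (@MAP R 3) env3a 1 + env_mean (@MAP R 3) env3b (tperm o30 o31).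
Proof.
rewrite /env_mean /MAP; have [-> -> -> ->] := norm1_env3.
rewrite !sum_ord3 !sum_ord3_cond /env3a /env3b /rel_of_seq /=.
rewrite invg1 tpermV !perm1 !tpermL !tpermR !tpermD //=; lra.
Qed.

End MAP.

(* Objects 0, 1 and 2 are relevant in exactly one of the two relevance vectors of
   each environment and object 3 in none, so the top-1 feedback has the same law
   under both environments. *)
Definition env4a (b : bool) : 'I_4 -> bool :=
  rel_of_seq (if b then [:: false; true; true; false] else [:: true; false; false; false]).
Definition env4b (b : bool) : 'I_4 -> bool :=
  rel_of_seq (if b then [:: false; true; false; false] else [:: true; false; true; false]).

Lemma feedback_equiv_env4 : feedback_equiv env4a env4b.
Proof. by move=> sg; rewrite !top_feedbackE; case: ((sg^-1)%g ord0) => [[|[|[|[|?]]]] ?]. Qed.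

Section AUC.
Variable R : realType.

Lemma norm1_env4 :
  [/\ Defs.norm1 (env4a true) = 2%N, Defs.norm1 (env4a false) = 1%N,
      Defs.norm1 (env4b true) = 1%N & Defs.norm1 (env4b false) = 2%N].
Proof. by split; rewrite norm1E !big_ord_recl big_ord0. Qed.

Lemma auc_env4_mean_ge sg :
  13 / 24 <= env_mean (@AUC R 4) env4a sg + env_mean (@AUC R 4) env4b sg.
Proof.
rewrite /env_mean /AUC; have [-> -> -> ->] := norm1_env4.
rewrite (_ : (2 * (4 - 2))%N = 4%N) // (_ : (1 * (4 - 1))%N = 3%N) //.
rewrite !sum_ord4 /env4a /env4b /rel_of_seq /=.
by case_perm4 sg; lra.
Qed.

Lemma auc_env4_gap :
  env_mean (@AUC R 4) env4a 1 + env_mean (@AUC R 4) env4b (tperm o40 o41) < 13 / 24.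
Proof.
rewrite /env_mean /AUC; have [-> -> -> ->] := norm1_env4.
rewrite (_ : (2 * (4 - 2))%N = 4%N) // (_ : (1 * (4 - 1))%N = 3%N) //.
rewrite !sum_ord4 /env4a /env4b /rel_of_seq /= !perm1 !tpermL !tpermR !tpermD //=; lra.
Qed.

End AUC.

Unset Implicit Arguments.

Theorem theorem6 (R : realType) :
  gain_regret_Omega_T (fun m => @NDCG R m) /\
  gain_regret_Omega_T (fun m => @MAP R m) /\
  loss_regret_Omega_T (fun m => @AUC R m).
Proof.
split; [|split].
- exists 3%N.
  exact: linear_gain_regret_of_gap feedback_equiv_env3 (@ndcg_env3_mean_le R) (@ndcg_env3_gap R).
- exists 3%N.
  exact: linear_gain_regret_of_gap feedback_equiv_env3 (@map_env3_mean_le R) (@map_env3_gap R).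
- apply: loss_regret_of_opp; exists 4%N.
  apply: (linear_gain_regret_of_gap (s1 := 1%g) (s2 := tperm o40 o41) (M := - (13 / 24))
           feedback_equiv_env4).
  + by move=> sg; rewrite !env_mean_opp -opprD lerN2 auc_env4_mean_ge.
  + by rewrite !env_mean_opp -opprD ltrN2 auc_env4_gap.
Qed.
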